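(* Let $\mathbb K=(K,\Delta,\varepsilon)$ be a comonad on a well-powered model category $\mathcal M$ whose model structure is injective (its cofibrations are exactly the monomorphisms). Then axioms (K0)–(K3) hold for $\mathbb K$ if and only if $K$ preserves monomorphisms.
   Context: $\mathcal M_{\mathbb K}$ is the category of $\mathbb K$-coalgebras $(D,\delta)$ with $\delta:D\to KD$ satisfying $K\delta\circ\delta=\Delta_D\circ\delta$ and $\varepsilon_D\circ\delta=\mathrm{Id}_D$; $U_{\mathbb K}$ is the forgetful functor and $F_{\mathbb K}X=(KX,\Delta_X)$ its right adjoint. A category is well-powered if the subobjects of each object form a set. Axioms, with $\mathsf{Cof}$ the cofibrations of $\mathcal M$: (K0) $\mathcal M_{\mathbb K}$ is complete; (K1) $\delta\in\mathsf{Cof}$ for every $\mathbb K$-coalgebra $(D,\delta)$; (K2) $K$ preserves cofibrations; (K3) for every morphism $i:(C,\gamma)\to F_{\mathbb K}X$ with $U_{\mathbb K}i\in\mathsf{Cof}$ and every morphism $g:(C,\gamma)\to(D,\delta)$ in $\mathcal M_{\mathbb K}$, the induced morphism $(i,g):(C,\gamma)\to F_{\mathbb K}X\times(D,\delta)$ satisfies $U_{\mathbb K}(i,g)\in\mathsf{Cof}$, if the product exists. *)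

From Stdlib Require Import ProofIrrelevance.

Set Implicit Arguments.

Record Category := {
  ob :> Type;
  hom : ob -> ob -> Type;
  idm : forall X, hom X X;
  comp : forall X Y Z, hom Y Z -> hom X Y -> hom X Z;
  comp_idl : forall X Y (f : hom X Y), comp (idm Y) f = f;
  comp_idr : forall X Y (f : hom X Y), comp f (idm X) = f;
  comp_assoc : forall X Y Z W (h : hom Z W) (g : hom Y Z) (f : hom X Y),
      comp h (comp g f) = comp (comp h g) f
}.
Arguments hom {C} : rename.
Arguments idm {C} X : rename.
Arguments comp {C X Y Z} : rename.

Record SmallCat := {
  sob : Set;
  shom : sob -> sob -> Set;
  sidm : forall X, shom X X;
  scomp : forall X Y Z, shom Y Z -> shom X Y -> shom X Z;
  scomp_idl : forall X Y (f : shom X Y), scomp (sidm Y) f = f;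
  scomp_idr : forall X Y (f : shom X Y), scomp f (sidm X) = f;
  scomp_assoc : forall X Y Z W (h : shom Z W) (g : shom Y Z) (f : shom X Y),
      scomp h (scomp g f) = scomp (scomp h g) f
}.

Definition SmallCat_cat (J : SmallCat) : Category :=
  {| ob := sob J; hom := @shom J; idm := @sidm J; comp := @scomp J;
     comp_idl := @scomp_idl J; comp_idr := @scomp_idr J;
     comp_assoc := @scomp_assoc J |}.

Record Functor (C D : Category) := {
  fob :> ob C -> ob D;
  fmap : forall X Y, hom X Y -> hom (fob X) (fob Y);
  fmap_id : forall X, fmap X X (idm X) = idm (fob X);
  fmap_comp : forall X Y Z (g : hom Y Z) (f : hom X Y),
      fmap X Z (comp g f) = comp (fmap Y Z g) (fmap X Y f)
}.
Arguments fmap {C D} F {X Y} : rename.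

Section CatNotions.
Variable C : Category.

Definition mono {X Y : C} (f : hom X Y) : Prop :=
  forall W (g h : hom W X), comp f g = comp f h -> g = h.

Definition iso {X Y : C} (f : hom X Y) : Prop :=
  exists g : hom Y X, comp g f = idm X /\ comp f g = idm Y.

(** Well-powered: the subobjects of every object form a (small) set, i.e.
    there is a Set-indexed family of monomorphisms into X such that every
    monomorphism into X is isomorphic (over X) to one of them. *)
Definition well_powered : Prop :=
  forall X : C, exists (I : Set) (S : I -> ob C) (m : forall i, hom (S i) X),
    (forall i, mono (m i)) /\
    (forall (Y : C) (f : hom Y X), mono f ->
       exists i (u : hom Y (S i)), iso u /\ comp (m i) u = f).

Definition is_product (A B P : C) (p1 : hom P A) (p2 : hom P B) : Prop :=
  forall (Z : C) (f : hom Z A) (g : hom Z B),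
    exists h : hom Z P, (comp p1 h = f /\ comp p2 h = g) /\
      forall h' : hom Z P, comp p1 h' = f -> comp p2 h' = g -> h' = h.

Definition is_cone (J : SmallCat) (D : Functor (SmallCat_cat J) C)
  (L : C) (l : forall j, hom L (D j)) : Prop :=
  forall (j k : sob J) (u : shom J j k), comp (fmap D u) (l j) = l k.

Definition is_limit (J : SmallCat) (D : Functor (SmallCat_cat J) C)
  (L : C) (l : forall j, hom L (D j)) : Prop :=
  is_cone D L l /\
  forall (M : C) (m : forall j, hom M (D j)), is_cone D M m ->
    exists h : hom M L, (forall j, comp (l j) h = m j) /\
      forall h' : hom M L, (forall j, comp (l j) h' = m j) -> h' = h.

Definition is_cocone (J : SmallCat) (D : Functor (SmallCat_cat J) C)
  (L : C) (l : forall j, hom (D j) L) : Prop :=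
  forall (j k : sob J) (u : shom J j k), comp (l k) (fmap D u) = l j.

Definition is_colimit (J : SmallCat) (D : Functor (SmallCat_cat J) C)
  (L : C) (l : forall j, hom (D j) L) : Prop :=
  is_cocone D L l /\
  forall (M : C) (m : forall j, hom (D j) M), is_cocone D M m ->
    exists h : hom L M, (forall j, comp h (l j) = m j) /\
      forall h' : hom L M, (forall j, comp h' (l j) = m j) -> h' = h.

Definition complete : Prop :=
  forall (J : SmallCat) (D : Functor (SmallCat_cat J) C),
    exists (L : C) (l : forall j, hom L (D j)), is_limit D L l.

Definition cocomplete : Prop :=
  forall (J : SmallCat) (D : Functor (SmallCat_cat J) C),
    exists (L : C) (l : forall j, hom (D j) L), is_colimit D L l.

Definition retract_of {A B X Y : C} (f : hom A B) (g : hom X Y) : Prop :=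
  exists (i : hom A X) (r : hom X A) (j : hom B Y) (s : hom Y B),
    comp r i = idm A /\ comp s j = idm B /\
    comp g i = comp j f /\ comp f r = comp s g.

Definition has_llp {A B X Y : C} (i : hom A B) (p : hom X Y) : Prop :=
  forall (u : hom A X) (v : hom B Y), comp p u = comp v i ->
    exists h : hom B X, comp h i = u /\ comp p h = v.

End CatNotions.

Arguments mono {C X Y}.
Arguments iso {C X Y}.
Arguments is_product {C}.
Arguments retract_of {C A B X Y}.
Arguments has_llp {C A B X Y}.

Definition morclass (C : Category) := forall X Y : C, hom X Y -> Prop.

Record ModelStructure (C : Category) := {
  W : morclass C;
  Cof : morclass C;
  Fib : morclass C;
  ms_complete : complete C;
  ms_cocomplete : cocomplete C;
  W_2of3_comp : forall X Y Z (f : hom X Y) (g : hom Y Z),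
      W _ _ f -> W _ _ g -> W _ _ (comp g f);
  W_2of3_left : forall X Y Z (f : hom X Y) (g : hom Y Z),
      W _ _ (comp g f) -> W _ _ g -> W _ _ f;
  W_2of3_right : forall X Y Z (f : hom X Y) (g : hom Y Z),
      W _ _ (comp g f) -> W _ _ f -> W _ _ g;
  W_retract : forall A B X Y (f : hom A B) (g : hom X Y),
      retract_of f g -> W _ _ g -> W _ _ f;
  Cof_retract : forall A B X Y (f : hom A B) (g : hom X Y),
      retract_of f g -> Cof _ _ g -> Cof _ _ f;
  Fib_retract : forall A B X Y (f : hom A B) (g : hom X Y),
      retract_of f g -> Fib _ _ g -> Fib _ _ f;
  lift_acyclic_cof : forall A B X Y (i : hom A B) (p : hom X Y),
      Cof _ _ i -> W _ _ i -> Fib _ _ p -> has_llp i p;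
  lift_acyclic_fib : forall A B X Y (i : hom A B) (p : hom X Y),
      Cof _ _ i -> Fib _ _ p -> W _ _ p -> has_llp i p;
  fact_acof_fib : forall X Y (f : hom X Y),
      exists Z (i : hom X Z) (p : hom Z Y),
        Cof _ _ i /\ W _ _ i /\ Fib _ _ p /\ comp p i = f;
  fact_cof_afib : forall X Y (f : hom X Y),
      exists Z (i : hom X Z) (p : hom Z Y),
        Cof _ _ i /\ Fib _ _ p /\ W _ _ p /\ comp p i = f
}.
Arguments W {C} m {X Y}.
Arguments Cof {C} m {X Y}.
Arguments Fib {C} m {X Y}.

Definition injective_model (C : Category) (MS : ModelStructure C) : Prop :=
  forall (X Y : C) (f : hom X Y), Cof MS f <-> mono f.

Record Comonad (C : Category) := {
  Kf :> Functor C C;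
  eps : forall X : C, hom (Kf X) X;
  del : forall X : C, hom (Kf X) (Kf (Kf X));
  eps_nat : forall X Y (f : hom X Y), comp f (eps X) = comp (eps Y) (fmap Kf f);
  del_nat : forall X Y (f : hom X Y),
      comp (fmap Kf (fmap Kf f)) (del X) = comp (del Y) (fmap Kf f);
  counit_l : forall X, comp (eps (Kf X)) (del X) = idm (Kf X);
  counit_r : forall X, comp (fmap Kf (eps X)) (del X) = idm (Kf X);
  coassoc : forall X,
      comp (fmap Kf (del X)) (del X) = comp (del (Kf X)) (del X)
}.
Arguments eps {C} k X : rename.
Arguments del {C} k X : rename.

Definition preserves_monos (C : Category) (F : Functor C C) : Prop :=
  forall (X Y : C) (f : hom X Y), mono f -> mono (fmap F f).

Section Coalgebras.
Variables (C : Category) (KK : Comonad C).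

Record Coalg := {
  cob : ob C;
  cstr : hom cob (KK cob);
  cstr_coassoc : comp (fmap KK cstr) cstr = comp (del KK cob) cstr;
  cstr_counit : comp (eps KK cob) cstr = idm cob
}.

Definition coalg_hom (A B : Coalg) : Type :=
  { f : hom (cob A) (cob B) | comp (cstr B) f = comp (fmap KK f) (cstr A) }.

Lemma coalg_id_prop (A : Coalg) :
  comp (cstr A) (idm (cob A)) = comp (fmap KK (idm (cob A))) (cstr A).
Proof. rewrite fmap_id, comp_idl, comp_idr. reflexivity. Qed.

Definition coalg_id (A : Coalg) : coalg_hom A A :=
  exist _ (idm (cob A)) (coalg_id_prop A).

Lemma coalg_comp_prop (A B D : Coalg) (g : coalg_hom B D) (f : coalg_hom A B) :
  comp (cstr D) (comp (proj1_sig g) (proj1_sig f))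
  = comp (fmap KK (comp (proj1_sig g) (proj1_sig f))) (cstr A).
Proof.
  destruct g as [g Hg], f as [f Hf]; simpl.
  rewrite comp_assoc, Hg, <- comp_assoc, Hf, comp_assoc, fmap_comp.
  reflexivity.
Qed.

Definition coalg_comp (A B D : Coalg) (g : coalg_hom B D) (f : coalg_hom A B)
  : coalg_hom A D :=
  exist _ (comp (proj1_sig g) (proj1_sig f)) (coalg_comp_prop g f).

Definition CoalgCat : Category.
Proof.
  refine {| ob := Coalg; hom := coalg_hom; idm := coalg_id;
            comp := coalg_comp |}.
  - intros X Y [f Hf]; apply subset_eq_compat; simpl; apply comp_idl.
  - intros X Y [f Hf]; apply subset_eq_compat; simpl; apply comp_idr.
  - intros X Y Z V [h Hh] [g Hg] [f Hf]; apply subset_eq_compat; simpl;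
      apply comp_assoc.
Defined.

Definition U_K {A B : Coalg} (f : coalg_hom A B) : hom (cob A) (cob B) :=
  proj1_sig f.

Definition F_K (X : C) : Coalg :=
  {| cob := KK X; cstr := del KK X;
     cstr_coassoc := coassoc KK X; cstr_counit := counit_l KK X |}.

End Coalgebras.

Arguments cob {C KK}.
Arguments cstr {C KK}.
Arguments U_K {C KK A B}.
Arguments F_K {C} KK X.

Section KConditions.
Variables (C : Category) (MS : ModelStructure C) (KK : Comonad C).

Definition K0 : Prop := complete (CoalgCat KK).

Definition K1 : Prop := forall D : Coalg KK, Cof MS (cstr D).

Definition K2 : Prop :=
  forall (X Y : C) (f : hom X Y), Cof MS f -> Cof MS (fmap KK f).

(** (K3): for i : (C,γ) -> F_K X with U_K i a cofibration and any
    g : (C,γ) -> (D,δ), the induced morphism (i,g) into a product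
    F_K X × (D,δ) in M_K (whenever such a product exists) is, after
    forgetting, a cofibration. *)
Definition K3 : Prop :=
  forall (X : C) (Cg Dd : Coalg KK)
         (i : coalg_hom Cg (F_K KK X)) (g : coalg_hom Cg Dd),
    Cof MS (U_K i) ->
    forall (P : Coalg KK) (p1 : coalg_hom P (F_K KK X))
           (p2 : coalg_hom P Dd),
      is_product (C := CoalgCat KK) (F_K KK X) Dd P p1 p2 ->
      forall h : coalg_hom Cg P,
        comp (C := CoalgCat KK) p1 h = i ->
        comp (C := CoalgCat KK) p2 h = g ->
        Cof MS (U_K h).

End KConditions.

(* Necessity is (K2) read through "cofibration = mono".  Conversely, if K
   preserves monos then (K2) is immediate, (K1) holds because every structure
   map is split by the counit, and (K3) because (i,g) followed by the first
   projection is the mono i.  For (K0), let L be the limit in M of the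
   underlying diagram.  The limit coalgebra is the least subobject T of K L
   through which every coalgebra map into the cofree coalgebra F_K L with
   compatible projections factors; it exists because M is complete and
   well-powered.  T lies in the pullback of K T -> K K L along
   T -> K L -> K K L, which gives T a structure map, and since K preserves
   monos this makes T a subcoalgebra of F_K L, carrying the limit cone. *)

From Stdlib Require Import ProofIrrelevance ClassicalEpsilon.

Local Notation "g ∘ f" := (comp g f) (at level 40, left associativity).

Definition factors_through {C : Category} {S T X : C} (g : hom S X) (m : hom T X)
  : Prop := exists h : hom S T, m ∘ h = g.

Lemma mono_of_retraction {C : Category} {X Y : C} {s : hom X Y} (r : hom Y X) :
  r ∘ s = idm X -> mono s.
Proof.
  intros Hrs W g h E.
  rewrite <- (comp_idl _ _ _ g), <- (comp_idl _ _ _ h), <- Hrs, <- !comp_assoc, E.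
  reflexivity.
Qed.

Lemma mono_comp {C : Category} {X Y Z : C} (f : hom X Y) (g : hom Y Z) :
  mono f -> mono g -> mono (g ∘ f).
Proof. intros Hf Hg W a b E. apply Hf, Hg. rewrite !comp_assoc. exact E. Qed.

Lemma mono_of_mono_comp {C : Category} {X Y Z : C} (f : hom X Y) (g : hom Y Z) :
  mono (g ∘ f) -> mono f.
Proof. intros Hgf W a b E. apply Hgf. rewrite <- !comp_assoc, E. reflexivity. Qed.

(* Wide pullbacks are limits over the sink category on [option A]: [None] is
   the common target, and the only non-identity arrows are [Some a -> None]. *)
Section WidePullbacks.
Variable A : Set.

Definition sink_hom (x y : option A) : Set :=
  match x, y with
  | None, None | Some _, None => unit
  | None, Some _ => Empty_set
  | Some a, Some b => {_ : unit | a = b}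
  end.

Definition sink_id (x : option A) : sink_hom x x :=
  match x as x0 return sink_hom x0 x0 with
  | None => tt
  | Some a => exist _ tt eq_refl
  end.

Definition sink_comp (x y z : option A) : sink_hom y z -> sink_hom x y -> sink_hom x z :=
  match x as x0, y as y0, z as z0
    return sink_hom y0 z0 -> sink_hom x0 y0 -> sink_hom x0 z0 with
  | None, None, None | Some _, None, None | Some _, Some _, None => fun _ _ => tt
  | None, None, Some _ => fun g _ => g
  | None, Some _, _ => fun _ f => match f with end
  | Some _, None, Some _ => fun g _ => match g with end
  | Some _, Some _, Some _ => fun g f => exist _ tt (eq_trans (proj2_sig f) (proj2_sig g))
  end.

Local Ltac sink_cases :=
  repeat match goal with o : option A |- _ => destruct o end; simpl in *;
  repeat match goal with
  | u : unit |- _ => destruct u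
  | e : Empty_set |- _ => destruct e
  | s : {_ : unit | _} |- _ => destruct s as [[] ?]
  end; simpl in *; subst; simpl in *; try reflexivity;
  try (f_equal; apply proof_irrelevance).

Definition SinkCat : SmallCat.
Proof.
  refine {| sob := option A; shom := sink_hom; sidm := sink_id; scomp := sink_comp |};
    intros; sink_cases.
Defined.

Variables (C : Category) (Z : C) (X : A -> C) (f : forall a, hom (X a) Z).

Definition sink_ob (o : option A) : C :=
  match o with None => Z | Some a => X a end.

Definition sink_fmap (x y : option A) : sink_hom x y -> hom (sink_ob x) (sink_ob y) :=
  match x as x0, y as y0 return sink_hom x0 y0 -> hom (sink_ob x0) (sink_ob y0) with
  | None, None => fun _ => idm Z
  | Some a, None => fun _ => f a
  | None, Some _ => fun u => match u with end
  | Some a, Some _ => fun u =>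
      match proj2_sig u in _ = b return hom (X a) (X b) with eq_refl => idm (X a) end
  end.

Definition sink_diagram : Functor (SmallCat_cat SinkCat) C.
Proof.
  refine (@Build_Functor (SmallCat_cat SinkCat) C sink_ob sink_fmap _ _).
  - intros [x|]; reflexivity.
  - intros [x|] [y|] [z|] g h; sink_cases; rewrite ?comp_idl, ?comp_idr; reflexivity.
Defined.

Lemma complete_wide_pullback : complete C ->
  exists (P : C) (p : forall a, hom P (X a)) (p0 : hom P Z),
    (forall a, f a ∘ p a = p0) /\
    (forall Q (q : forall a, hom Q (X a)) (q0 : hom Q Z), (forall a, f a ∘ q a = q0) ->
       exists h, (forall a, p a ∘ h = q a) /\ p0 ∘ h = q0) /\
    (forall Q (h h' : hom Q P), (forall a, p a ∘ h = p a ∘ h') ->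
       p0 ∘ h = p0 ∘ h' -> h = h').
Proof.
  intros HC. destruct (HC SinkCat sink_diagram) as (P & l & Hcone & Huniv).
  exists P, (fun a => l (Some a)), (l None). split; [|split].
  - intros a. exact (Hcone (Some a) None tt).
  - intros Q q q0 Hq.
    destruct (Huniv Q (fun o => match o as o0 return hom Q (sink_ob o0) with
                               None => q0 | Some a => q a end)) as [h [Hh _]].
    + intros [j|] [k|] u; sink_cases; rewrite ?comp_idl; auto.
    + exists h. split; [intros a; exact (Hh (Some a)) | exact (Hh None)].
  - intros Q h h' E1 E0.
    destruct (Huniv Q (fun o => l o ∘ h)) as [g [_ Hg]].
    + intros j k u. rewrite comp_assoc. f_equal. apply Hcone.
    + rewrite (Hg h) by reflexivity. symmetry. apply Hg. intros [j|]; simpl; auto.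
Qed.

End WidePullbacks.

Section SubobjectsFromLimits.
Variables (C : Category) (HC : complete C).

Lemma pullback_of_mono {X Y Z : C} (f : hom X Z) (g : hom Y Z) : mono g ->
  exists (P : C) (p : hom P X) (q : hom P Y), mono p /\ f ∘ p = g ∘ q /\
    forall S (u : hom S X) (v : hom S Y), f ∘ u = g ∘ v -> factors_through u p.
Proof.
  intros Hg.
  pose (Xb := fun b : bool => if b then X else Y).
  pose (fb := fun b : bool => if b as b0 return hom (Xb b0) Z then f else g).
  destruct (complete_wide_pullback bool C Z Xb fb HC)
    as (P & pr & p0 & Hcomm & Hlift & Hjoint).
  pose (p := pr true : hom P X). pose (q := pr false : hom P Y).
  assert (Hp : f ∘ p = p0) by exact (Hcomm true).
  assert (Hq : g ∘ q = p0) by exact (Hcomm false).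
  exists P, p, q. split; [|split].
  - intros W h h' E.
    assert (E0 : p0 ∘ h = p0 ∘ h') by (rewrite <- Hp, <- !comp_assoc, E; reflexivity).
    apply Hjoint; [|exact E0].
    intros [|]; [exact E|]. change (q ∘ h = q ∘ h'). apply Hg.
    rewrite !comp_assoc, Hq. exact E0.
  - rewrite Hp, Hq. reflexivity.
  - intros S u v Huv.
    destruct (Hlift S (fun b => if b as b0 return hom S (Xb b0) then u else v) (f ∘ u))
      as [h [Hh _]].
    + intros [|]; [reflexivity | symmetry; exact Huv].
    + exists h. exact (Hh true).
Qed.

Lemma intersection_of_monos {A : Set} {Z : C} {X : A -> C} (m : forall a, hom (X a) Z) :
  (forall a, mono (m a)) ->
  exists (T : C) (t : hom T Z), mono t /\ (forall a, factors_through t (m a)) /\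
    forall S (g : hom S Z), (forall a, factors_through g (m a)) -> factors_through g t.
Proof.
  intros Hm.
  destruct (complete_wide_pullback A C Z X m HC) as (T & p & t & Hcomm & Hlift & Hjoint).
  exists T, t. split; [|split].
  - intros W h h' E. apply Hjoint; [|exact E].
    intros a. apply Hm. rewrite !comp_assoc, Hcomm. exact E.
  - intros a. exists (p a). apply Hcomm.
  - intros S g Hg.
    assert (hs : forall a, {h : hom S (X a) | m a ∘ h = g})
      by (intros a; apply constructive_indefinite_description, Hg).
    destruct (Hlift S (fun a => proj1_sig (hs a)) g) as [h [_ Hh]].
    + intros a. exact (proj2_sig (hs a)).
    + exists h. exact Hh.
Qed.

Hypothesis HW : well_powered C.

Lemma least_subobject {X : C} {Ix : Type} {src : Ix -> C} (g : forall x, hom (src x) X) :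
  exists (T : C) (t : hom T X), mono t /\ (forall x, factors_through (g x) t) /\
    forall S (s : hom S X), mono s -> (forall x, factors_through (g x) s) ->
      factors_through t s.
Proof.
  destruct (HW X) as (I & Sub & mk & Hmk & Hrep).
  pose (Up := {i : I | forall x, factors_through (g x) (mk i)}).
  destruct (intersection_of_monos (fun u : Up => mk (proj1_sig u)) (fun u => Hmk _))
    as (T & t & Ht & Hbelow & Hmeet).
  exists T, t. split; [exact Ht | split].
  - intros x. apply Hmeet. intros [i Hi]. exact (Hi x).
  - intros S s Hs Hcont.
    destruct (Hrep S s Hs) as (i & u & [v [_ Huv]] & Hu).
    assert (Hi : forall x, factors_through (g x) (mk i)).
    { intros x. destruct (Hcont x) as [h Hh].
      exists (u ∘ h). rewrite comp_assoc, Hu. exact Hh. }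
    destruct (Hbelow (exist _ i Hi)) as [k Hk].
    exists (v ∘ k). simpl in Hk.
    rewrite <- Hu, <- comp_assoc, (comp_assoc _ _ _ _ _ u v k), Huv, comp_idl. exact Hk.
Qed.

End SubobjectsFromLimits.

Section Coalgebras.
Context {M : Category} {KK : Comonad M}.

Lemma coalg_hom_eq {A B : Coalg KK} (f g : coalg_hom A B) : U_K f = U_K g -> f = g.
Proof. destruct f, g; unfold U_K; simpl; intros ->; f_equal; apply proof_irrelevance. Qed.

Lemma cstr_mono (A : Coalg KK) : mono (cstr A).
Proof. exact (mono_of_retraction _ (cstr_counit A)). Qed.

Lemma cofree_lift_prop (A : Coalg KK) {Y : M} (a : hom (cob A) Y) :
  cstr (F_K KK Y) ∘ (fmap KK a ∘ cstr A) = fmap KK (fmap KK a ∘ cstr A) ∘ cstr A.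
Proof.
  simpl. rewrite comp_assoc, <- del_nat, fmap_comp, <- !comp_assoc, cstr_coassoc.
  reflexivity.
Qed.

Definition cofree_lift (A : Coalg KK) {Y : M} (a : hom (cob A) Y)
  : coalg_hom A (F_K KK Y) := exist _ (fmap KK a ∘ cstr A) (cofree_lift_prop A a).

Lemma eps_cofree_lift (A : Coalg KK) {Y : M} (a : hom (cob A) Y) :
  eps KK Y ∘ U_K (cofree_lift A a) = a.
Proof.
  unfold U_K; simpl.
  rewrite comp_assoc, <- eps_nat, <- comp_assoc, cstr_counit, comp_idr. reflexivity.
Qed.

Lemma cofree_lift_eps (A : Coalg KK) {Y : M} (g : coalg_hom A (F_K KK Y)) :
  cofree_lift A (eps KK Y ∘ U_K g) = g.
Proof.
  apply coalg_hom_eq. destruct g as [g Hg]. unfold U_K in *; simpl in *.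
  rewrite fmap_comp, <- comp_assoc, <- Hg, comp_assoc, counit_r, comp_idl. reflexivity.
Qed.

Section Factorization.
Context {A B T : Coalg KK} (t : coalg_hom T B) (m : coalg_hom A B).
Variable h : hom (cob A) (cob T).
Hypotheses (Kt_mono : mono (fmap KK (U_K t))) (Hh : U_K t ∘ h = U_K m).

Lemma coalg_factor_prop : cstr T ∘ h = fmap KK h ∘ cstr A.
Proof.
  apply Kt_mono. destruct t as [t0 Ht], m as [m0 Hm]; unfold U_K in *; simpl in *.
  rewrite comp_assoc, <- Ht, <- comp_assoc, Hh, Hm, comp_assoc, <- fmap_comp, Hh.
  reflexivity.
Qed.

Definition coalg_factor : coalg_hom A T := exist _ h coalg_factor_prop.

End Factorization.

Section Subcoalgebras.
Hypothesis HK : preserves_monos KK.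
Context {B : Coalg KK} {T : M} {t : hom T (cob B)} {σ : hom T (KK T)}.
Hypotheses (t_mono : mono t) (t_hom : cstr B ∘ t = fmap KK t ∘ σ).

Lemma sub_coassoc : fmap KK σ ∘ σ = del KK T ∘ σ.
Proof.
  apply (HK _ _ _ (HK _ _ _ t_mono)).
  rewrite comp_assoc, <- fmap_comp, <- t_hom, fmap_comp.
  rewrite (comp_assoc _ _ _ _ _ (fmap KK (fmap KK t))), del_nat, <- !comp_assoc, <- t_hom.
  rewrite !comp_assoc, cstr_coassoc. reflexivity.
Qed.

Lemma sub_counit : eps KK T ∘ σ = idm T.
Proof.
  apply t_mono.
  rewrite comp_assoc, eps_nat, <- comp_assoc, <- t_hom, comp_assoc, cstr_counit.
  rewrite comp_idl, comp_idr. reflexivity.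
Qed.

Definition sub_coalg : Coalg KK :=
  {| cob := T; cstr := σ; cstr_coassoc := sub_coassoc; cstr_counit := sub_counit |}.

Definition sub_coalg_incl : coalg_hom sub_coalg B := exist _ t t_hom.

End Subcoalgebras.
End Coalgebras.

Section CoalgebraLimits.
Context {M : Category} {KK : Comonad M}.
Hypotheses (HC : complete M) (HW : well_powered M) (HK : preserves_monos KK).
Context {J : SmallCat} (D : Functor (SmallCat_cat J) (CoalgCat KK)).

Definition forget_diagram : Functor (SmallCat_cat J) M.
Proof.
  refine (@Build_Functor (SmallCat_cat J) M (fun j => cob (D j))
            (fun j k u => U_K (fmap D u)) _ _).
  - intros j. exact (f_equal U_K (fmap_id D j)).
  - intros j k i g f. exact (f_equal U_K (fmap_comp D _ _ _ g f)).
Defined.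

Context {L : M} {l : forall j, hom L (cob (D j))} (Hl : is_limit forget_diagram L l).

Definition lim_proj j : hom (KK L) (cob (D j)) := l j ∘ eps KK L.

(* For a coalgebra map [m] into [F_K L] this says that [lim_proj j ∘ m] is a
   coalgebra map (lemma [compatible_coalg_hom_prop]); it is stated without a
   structure on [S] so that it cuts out a subobject of [K L]. *)
Definition compatible_at j {S : M} (m : hom S (KK L)) : Prop :=
  cstr (D j) ∘ lim_proj j ∘ m = fmap KK (l j) ∘ m.

Lemma compatible_at_comp j {S R : M} (m : hom S (KK L)) (h : hom R S) :
  compatible_at j m -> compatible_at j (m ∘ h).
Proof. unfold compatible_at. intros H. rewrite !comp_assoc, H. reflexivity. Qed.

Lemma compatible_subobject j : exists (P : M) (p : hom P (KK L)),
  mono p /\ compatible_at j p /\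
  forall S (m : hom S (KK L)), compatible_at j m -> factors_through m p.
Proof.
  destruct (pullback_of_mono M HC (fmap KK (l j)) _ (cstr_mono (D j)))
    as (P & p & q & Hp & Hpq & Hfac).
  assert (Hq : q = lim_proj j ∘ p).
  { rewrite <- (comp_idl _ _ _ q), <- (cstr_counit (D j)), <- comp_assoc, <- Hpq.
    unfold lim_proj. rewrite comp_assoc, <- eps_nat. reflexivity. }
  exists P, p. split; [exact Hp | split].
  - unfold compatible_at. rewrite <- comp_assoc, <- Hq. symmetry. exact Hpq.
  - intros S m Hm. apply (Hfac S m (lim_proj j ∘ m)).
    rewrite comp_assoc. symmetry. exact Hm.
Qed.

Lemma compatible_coalg_hom_prop {A : Coalg KK} (m : coalg_hom A (F_K KK L)) j :
  compatible_at j (U_K m) ->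
  cstr (D j) ∘ (lim_proj j ∘ U_K m) = fmap KK (lim_proj j ∘ U_K m) ∘ cstr A.
Proof.
  destruct m as [m Hm]. unfold compatible_at, lim_proj, U_K in *; simpl in *.
  intros Hc. rewrite comp_assoc, Hc, !fmap_comp, <- !comp_assoc, <- Hm.
  rewrite (comp_assoc _ _ _ _ _ (fmap KK (eps KK L))), counit_r, comp_idl. reflexivity.
Qed.

Record compatible_map := {
  cm_src : Coalg KK;
  cm_map : coalg_hom cm_src (F_K KK L);
  cm_compatible : forall j, compatible_at j (U_K cm_map)
}.

Section LimitCoalgebra.
Context {T : M} {t : hom T (KK L)}.
Hypotheses (t_mono : mono t)
  (t_contains : forall x : compatible_map, factors_through (U_K (cm_map x)) t)
  (t_least : forall S (s : hom S (KK L)), mono s ->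
     (forall x : compatible_map, factors_through (U_K (cm_map x)) s) ->
     factors_through t s).

Lemma t_compatible j : compatible_at j t.
Proof.
  destruct (compatible_subobject j) as (P & p & Hp & Hpc & Hpf).
  destruct (t_least P p Hp) as [h <-].
  - intros x. apply Hpf, cm_compatible.
  - apply compatible_at_comp, Hpc.
Qed.

Lemma t_costructure : exists σ : hom T (KK T), del KK L ∘ t = fmap KK t ∘ σ.
Proof.
  destruct (pullback_of_mono M HC (del KK L ∘ t) _ (HK _ _ _ t_mono))
    as (V & p & q & Hp & Hpq & Hfac).
  destruct (t_least V (t ∘ p) (mono_comp _ _ Hp t_mono)) as [r Hr].
  - intros [A m Hc].
    destruct (t_contains {| cm_src := A; cm_map := m; cm_compatible := Hc |}) as [h Hh].
    simpl in *.
    destruct (Hfac _ h (fmap KK h ∘ cstr A)) as [w Hw].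
    + rewrite <- comp_assoc, Hh, (proj2_sig m : del KK L ∘ U_K m = _).
      rewrite comp_assoc, <- fmap_comp, Hh. reflexivity.
    + exists w. rewrite <- comp_assoc, Hw. exact Hh.
  - assert (Hpr : p ∘ r = idm T)
      by (apply t_mono; rewrite comp_idr, comp_assoc; exact Hr).
    exists (q ∘ r). rewrite comp_assoc, <- Hpq, <- comp_assoc, Hpr, comp_idr.
    reflexivity.
Qed.

Context {σ : hom T (KK T)}.
Hypothesis t_hom : del KK L ∘ t = fmap KK t ∘ σ.

Definition lim_coalg : Coalg KK := sub_coalg HK (B := F_K KK L) t_mono t_hom.

Definition lim_incl : coalg_hom lim_coalg (F_K KK L) :=
  sub_coalg_incl HK (B := F_K KK L) t_mono t_hom.

Definition lim_cone j : hom (C := CoalgCat KK) lim_coalg (D j) :=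
  exist _ (lim_proj j ∘ t) (compatible_coalg_hom_prop lim_incl j (t_compatible j)).

Lemma lim_cone_is_cone : is_cone D lim_coalg lim_cone.
Proof.
  intros j k u. apply coalg_hom_eq.
  assert (Hcone : U_K (fmap D u) ∘ l j = l k) by exact (proj1 Hl j k u).
  simpl. unfold lim_proj, U_K in *. rewrite !comp_assoc, Hcone. reflexivity.
Qed.

Section Universality.
Context {N : Coalg KK} {n : forall j, hom (C := CoalgCat KK) N (D j)}.
Context {a : hom (cob N) L}.
Hypotheses (Ha : forall j, l j ∘ a = U_K (n j))
  (Ha_unique : forall a', (forall j, l j ∘ a' = U_K (n j)) -> a' = a).

Lemma lim_proj_cofree_lift j : lim_proj j ∘ U_K (cofree_lift N a) = U_K (n j).
Proof. unfold lim_proj. rewrite <- comp_assoc, eps_cofree_lift. apply Ha. Qed.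

Lemma cofree_lift_compatible j : compatible_at j (U_K (cofree_lift N a)).
Proof.
  unfold compatible_at. rewrite <- comp_assoc, lim_proj_cofree_lift.
  unfold U_K in *. rewrite (proj2_sig (n j)), <- Ha, fmap_comp.
  simpl. rewrite comp_assoc. reflexivity.
Qed.

Lemma lim_cone_mediator :
  exists h : coalg_hom N lim_coalg, forall j, comp (C := CoalgCat KK) (lim_cone j) h = n j.
Proof.
  destruct (t_contains {| cm_src := N; cm_map := cofree_lift N a;
                          cm_compatible := cofree_lift_compatible |}) as [h Hh].
  exists (coalg_factor lim_incl (cofree_lift N a) h (HK _ _ _ t_mono) Hh).
  intros j. apply coalg_hom_eq. simpl in *.
  rewrite <- comp_assoc, Hh. apply lim_proj_cofree_lift.
Qed.

Lemma lim_cone_factor_lift (g : coalg_hom N lim_coalg) :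
  (forall j, comp (C := CoalgCat KK) (lim_cone j) g = n j) ->
  t ∘ U_K g = U_K (cofree_lift N a).
Proof.
  intros Hg.
  assert (He : eps KK L ∘ (t ∘ U_K g) = a).
  { apply Ha_unique. intros j. rewrite <- (Hg j). unfold lim_proj; simpl.
    rewrite !comp_assoc. reflexivity. }
  rewrite <- He. symmetry.
  exact (f_equal U_K (cofree_lift_eps N (comp (C := CoalgCat KK) lim_incl g))).
Qed.

End Universality.

Lemma lim_cone_is_limit : is_limit D lim_coalg lim_cone.
Proof.
  split; [exact lim_cone_is_cone|].
  intros N n Hn.
  assert (Hcone : is_cone forget_diagram (cob N) (fun j => U_K (n j)))
    by (intros j k u; exact (f_equal U_K (Hn j k u))).
  destruct (proj2 Hl _ _ Hcone) as [a [Ha Ha_unique]].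
  destruct (lim_cone_mediator Ha) as [h Hh].
  exists h. split; [exact Hh|].
  intros h' Hh'. apply coalg_hom_eq, t_mono.
  rewrite (lim_cone_factor_lift Ha_unique h Hh), (lim_cone_factor_lift Ha_unique h' Hh').
  reflexivity.
Qed.

End LimitCoalgebra.

Lemma coalg_limit_exists :
  exists (P : Coalg KK) (p : forall j, hom (C := CoalgCat KK) P (D j)), is_limit D P p.
Proof.
  destruct (least_subobject M HC HW (fun x : compatible_map => U_K (cm_map x)))
    as (T & t & Ht & Hcont & Hleast).
  destruct (t_costructure Ht Hcont Hleast) as [σ Hσ].
  eexists. eexists. exact (lim_cone_is_limit Ht Hcont Hleast Hσ).
Qed.

End CoalgebraLimits.

Theorem coalg_complete {M : Category} (KK : Comonad M) :
  complete M -> well_powered M -> preserves_monos KK -> complete (CoalgCat KK).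
Proof.
  intros HC HW HK J D. destruct (HC J (forget_diagram D)) as (L & l & Hl).
  exact (coalg_limit_exists HC HW HK D Hl).
Qed.

Theorem lemma5p3 (M : Category) (MS : ModelStructure M) (KK : Comonad M) :
  well_powered M ->
  injective_model MS ->
  ((K0 KK /\ K1 MS KK /\ K2 MS KK /\ K3 MS KK) <-> preserves_monos KK).
Proof.
  intros HW Hinj. split.
  - intros (_ & _ & HK2 & _) X Y f Hf. apply Hinj, HK2, Hinj, Hf.
  - intros HK. refine (conj _ (conj _ (conj _ _))).
    + exact (coalg_complete KK (ms_complete MS) HW HK).
    + intros A. apply Hinj, cstr_mono.
    + intros X Y f Hf. apply Hinj, HK, Hinj, Hf.
    + intros X A B i g Hi P p1 p2 _ h Hh1 _. apply Hinj.
      apply (mono_of_mono_comp _ (U_K p1)).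
      change (mono (U_K (comp (C := CoalgCat KK) p1 h))). rewrite Hh1.
      apply Hinj, Hi.
Qed.
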